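(* Let $T:S_n\to GL(d,\mathbb{C})$ be a representation with character $\chi$, and let $\sigma,\tau\in S_n$ both have the same prime order $p$. Then $T(\sigma)$ and $T(\tau)$ are similar if and only if $\chi(\sigma)=\chi(\tau)$. *)

From HB Require Import structures.
From mathcomp Require Import all_boot all_order all_algebra all_fingroup all_solvable all_field all_character.
Set Implicit Arguments. Unset Strict Implicit. Unset Printing Implicit Defensive.

From HB Require Import structures.
From mathcomp Require Import all_boot all_order all_algebra all_fingroup all_solvable all_field all_character.
Set Implicit Arguments. Unset Strict Implicit. Unset Printing Implicit Defensive.
Import GRing.Theory Num.Theory.
Local Open Scope ring_scope.

(* Similar matrices have equal traces, which gives one direction.  Conversely,
   a representation restricted to a cyclic group <[x]> is determined up to
   similarity by its character, so T(sigma) ~ T(tau) as soon as chi agrees on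
   all powers sigma^k and tau^k.  For k prime to p this follows from
   chi(sigma) = chi(tau) by applying a Galois automorphism of Q(zeta_p) sending
   zeta_p to zeta_p^k; for p | k both powers are the identity. *)

Lemma similar_mxtrace (F : fieldType) n (A B : 'M[F]_n) :
  similar_in unitmx A B -> \tr A = \tr B.
Proof.
case=> P uP /(similarRL uP) ->.
by rewrite mxtrace_mulC mulmxA mulVmx ?mul1mx.
Qed.

Section CharacterPowers.

Variables (gT : finGroupType) (G : {group gT}) (chi : 'CF(G)).
Hypothesis Nchi : chi \is a character.

(* On <[x]> the character is a sum of linear characters, whose values are
   #[x]-th roots of unity. *)
Lemma char_expg_aut x k (u : {rmorphism algC -> algC}) :
    x \in G -> (forall z, z ^+ #[x]%g = 1 -> u z = z ^+ k) ->
  chi (x ^+ k)%g = u (chi x).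
Proof.
move=> Gx uE; have sXG : <[x]>%g \subset G by rewrite cycle_subG.
rewrite -(cfResE _ sXG (mem_cycle x k)) -(cfResE _ sXG (cycle_id x)).
have [r ->] := char_sum_irr (cfRes_char <[x]>%g Nchi).
rewrite !sum_cfunE rmorph_sum; apply: eq_bigr => i _.
have lin_i : 'chi[<[x]>%g]_i \is a linear_char.
  by rewrite irr_cyclic_lin ?cycle_cyclic.
by rewrite lin_charX ?cycle_id // uE // -lin_charX ?cycle_id // expg_order lin_char1.
Qed.

Lemma char_prime_order_expg x y p k :
    x \in G -> y \in G -> prime p -> #[x]%g = p -> #[y]%g = p ->
  chi x = chi y -> chi (x ^+ k)%g = chi (y ^+ k)%g.
Proof.
move=> Gx Gy pr_p ox oy chi_xy.
have [co_kp | ] := boolP (coprime k p).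
  have [u uE] := Qn_aut_exists co_kp.
  rewrite (char_expg_aut (u := u) Gx) ?ox //.
  by rewrite (char_expg_aut (u := u) Gy) ?oy // chi_xy.
rewrite coprime_sym prime_coprime // negbK => /dvdnP[m ->].
have [xp1 yp1] : (x ^+ p = 1)%g /\ (y ^+ p = 1)%g.
  by rewrite -{1}ox -{1}oy !expg_order.
by rewrite mulnC !expgM xp1 yp1 !expg1n.
Qed.

End CharacterPowers.

Lemma cfRepr_expg_similar (gT : finGroupType) (G : {group gT}) n
    (rG : mx_representation algC G n) x y :
    x \in G -> y \in G -> #[x]%g = #[y]%g ->
    (forall k, cfRepr rG (x ^+ k)%g = cfRepr rG (y ^+ k)%g) ->
  similar_in unitmx (rG x) (rG y).
Proof.
move=> Gx Gy oxy chiXY.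
have dv_yx : (#[y]%g %| #[x]%g)%N by rewrite oxy.
pose f := eltm_morphism dv_yx.
have sXG : <[x]>%g \subset G by rewrite cycle_subG.
have sXpreG : <[x]>%g \subset (f @*^-1 G)%g.
  apply/subsetP=> _ /cycleP[k ->]; apply/morphpreP; split; first exact: mem_cycle.
  by rewrite /= eltmE groupX.
(* rX and rY send x ^+ k to rG (x ^+ k) and rG (y ^+ k): two representations
   of <[x]> with the same character, hence similar. *)
pose rX := subg_repr rG sXG.
pose rY := subg_repr (morphpre_repr f rG) sXpreG.
have : cfRepr rX == cfRepr rY.
  apply/eqP/cfun_inP=> _ /cycleP[k ->].
  have := chiXY k; rewrite !cfunE !groupX ?cycle_id // => ->.
  by rewrite /= eltmE.
case/cfRepr_rsimP=> B _ fB rsimB.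
have uB : B \in unitmx by rewrite -row_free_unit.
have rB : rG x *m B = B *m rG y.
  by have := rsimB x (cycle_id x); rewrite /= eltm_id.
exists (invmx B); first by rewrite unitmx_inv.
apply/similarP; first by rewrite unitmx_inv.
apply: (canRL (mulmxK uB)).
by rewrite -mulmxA rB mulmxA mulVmx ?mul1mx.
Qed.

Theorem corollary3p4 (n d p : nat)
    (T : mx_representation algC [set: 'S_n]%G d)
    (sigma tau : 'S_n) :
  prime p -> #[sigma]%g = p -> #[tau]%g = p ->
  (similar_in unitmx (T sigma) (T tau) <->
   cfRepr T sigma = cfRepr T tau).
Proof.
move=> pr_p osigma otau; split=> [sim_T | chi_eq].
  by rewrite !cfunE !inE !mulr1n; apply: similar_mxtrace.
apply: cfRepr_expg_similar; rewrite ?inE ?osigma ?otau // => k.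
by apply: (char_prime_order_expg (cfRepr_char T) k _ _ pr_p osigma otau chi_eq);
  rewrite inE.
Qed.
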